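(* Let $k\ge 0$ and $m=2k+1$. Let $R_m(\hat K)=P_m(\hat K)+\mathrm{span}\{\hat x^m\hat y-\hat x\hat y^m\}$. If $\hat v\in R_m(\hat K)$ vanishes at all points of $G\cup I$, then $\hat v\equiv 0$.
   Context: $\hat K=[-1,1]^2$; $P_m(\hat K)$ is the space of polynomials of total degree $\le m$ on $\hat K$. Let $g_{-k},\dots,g_k$ be the zeros of the Legendre polynomial of degree $2k+1$ on $[-1,1]$. $G=\{(1,g_i),(-1,g_i),(g_i,1),(g_i,-1): i=-k,\dots,k\}$ is the set of $4(2k+1)$ Gauss–Legendre points on the boundary of $\hat K$. $I$ is a set of $(2k-1)(k-1)$ points in the interior of $\hat K$ (the standard Lagrange points) that is unisolvent for $P_{2k-3}(\hat K)$, i.e. every polynomial in $P_{2k-3}(\hat K)$ is uniquely determined by its values on $I$; $I=\emptyset$ when $k\le 1$. *)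

From HB Require Import structures.
From mathcomp Require Import all_boot all_order all_algebra.
Set Implicit Arguments. Unset Strict Implicit. Unset Printing Implicit Defensive.
Import Order.TTheory GRing.Theory Num.Theory.
Local Open Scope ring_scope.

Definition legendre (R : rcfType) (n : nat) : {poly R} :=
  ((2 ^ n * n `!)%:R)^-1 *: ((('X ^+ 2 - 1) ^+ n)^`(n)).

(* A polynomial of total degree <= m in two variables, given by its
   coefficients c i j (only those with i + j <= m are used), evaluated at (x,y). *)
Definition evalP (R : rcfType) (m : nat) (c : nat -> nat -> R) (x y : R) : R :=
  \sum_(i < m.+1) \sum_(j < (m - i).+1) c i j * x ^+ i * y ^+ j.

(* An element of R_m = P_m + span{x^m y - x y^m}, given by c (P_m part)
   and a (coefficient of the extra function), evaluated at (x,y). *)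
Definition evalR (R : rcfType) (m : nat) (c : nat -> nat -> R) (a x y : R) : R :=
  evalP m c x y + a * (x ^+ m * y - x * y ^+ m).

Definition gaussBoundary (R : rcfType) (n : nat) (g : 'I_n -> R) : seq (R * R) :=
  [seq (1, g i) | i <- enum 'I_n] ++ [seq (-1, g i) | i <- enum 'I_n] ++
  [seq (g i, 1) | i <- enum 'I_n] ++ [seq (g i, -1) | i <- enum 'I_n].

(* Let v in R_m vanish on G and I.  On a side x = +-1 (or y = +-1) v is a
   polynomial of degree at most m in the other variable with the m zeros of
   the Legendre polynomial P_m among its roots, hence a multiple of P_m.  As
   P_m(+-1) = +-1, the values at a corner computed along the two sides through
   it must agree; three corners force the coefficient of x^m y - x y^m and the
   coefficients of x^m and y^m to vanish, so v lies in P_m and vanishes on the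
   whole boundary.  Then v = (x^2 - 1)(y^2 - 1) q with q in P_{2k-3}, and q
   vanishes on I, hence q = 0 by the unisolvence of I. *)

From HB Require Import structures.
From mathcomp Require Import all_boot all_order all_algebra.
From mathcomp Require Import zify ring lra.
Import Order.TTheory GRing.Theory Num.Theory.
Set Implicit Arguments. Unset Strict Implicit. Unset Printing Implicit Defensive.
Local Open Scope ring_scope.

Section Univariate.
Variable R : numFieldType.
Implicit Types (p q : {poly R}) (s : R).

(* In characteristic zero, a polynomial whose polynomial function vanishes
   identically is the zero polynomial (it has the roots 0, 1, ..., size p - 1). *)
Lemma poly_eq0_of_horner p : (forall x, p.[x] = 0) -> p = 0.
Proof.
move=> p0; apply: (@roots_geq_poly_eq0 _ p [seq i%:R | i <- iota 0 (size p)]).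
- by apply/allP => _ /mapP [i _ ->]; apply/rootP.
- by rewrite map_inj_uniq ?iota_uniq // => i j /eqP; rewrite eqr_nat => /eqP.
- by rewrite size_map size_iota.
Qed.

Lemma coef_eq0_of_horner N (a : nat -> R) :
  (forall y, \sum_(j < N) a j * y ^+ j = 0) -> forall j, (j < N)%N -> a j = 0.
Proof.
move=> a0 j ltjN; have P0 : \poly_(i < N) a i = 0.
  by apply: poly_eq0_of_horner => y; rewrite horner_poly a0.
by have := congr1 (fun p => p`_j) P0; rewrite coef_poly ltjN coef0.
Qed.

Lemma poly_proportional m (z : 'I_m -> R) p q :
  injective z -> (size p <= m.+1)%N -> (size q <= m.+1)%N ->
  (forall i, p.[z i] = 0) -> (forall i, q.[z i] = 0) ->
  q`_m *: p = p`_m *: q.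
Proof.
move=> z_inj sz_p sz_q p0 q0; apply/eqP; rewrite -subr_eq0; apply/eqP.
apply: (@roots_geq_poly_eq0 _ _ [seq z i | i <- enum 'I_m]).
- by apply/allP => _ /mapP [i _ ->]; rewrite rootE !hornerE p0 q0 !mulr0 subrr.
- by rewrite map_inj_uniq ?enum_uniq.
rewrite size_map size_enum_ord; apply/leq_sizeP => j le_mj.
rewrite coefB !coefZ; have [->|ne_jm] := eqVneq j m; first by rewrite mulrC subrr.
have lt_mj : (m < j)%N by rewrite ltn_neqAle eq_sym ne_jm.
by rewrite [p`_j]nth_default ?[q`_j]nth_default ?mulr0 ?subrr // (leq_trans _ lt_mj).
Qed.

Lemma divp_X2sub1 p : (forall s, s ^+ 2 = 1 -> p.[s] = 0) ->
  p = p %/ ('X^2 - 1) * ('X^2 - 1) /\ size (p %/ ('X^2 - 1)) = (size p - 2)%N.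
Proof.
move=> p0; have sz_D : size ('X^2 - 1 : {poly R}) = 3%N by rewrite -polyC1 size_XnsubC.
split; last by rewrite size_divp ?sz_D // -size_poly_eq0 sz_D.
apply/esym/divpK.
have -> : 'X^2 - 1 = ('X - 1%:P) * ('X - (-1)%:P) :> {poly R}.
  by rewrite polyCN opprK polyC1 mulrDr !mulrBl -expr2 mulr1 mul1r; ring.
rewrite Gauss_dvdp; last first.
  by rewrite coprimep_XsubC root_XsubC eq_sym -subr_eq0 opprK -mulr2n pnatr_eq0.
by rewrite !dvdp_XsubCl !rootE !p0 ?eqxx // ?sqrrN expr1n.
Qed.

Lemma derivn_horner_taylor p n s :
  (p^`(n)).[s] = (p \Po ('X + s%:P))`_n *+ n`!.
Proof.
have shift m : (p \Po ('X + s%:P))^`(m) = p^`(m) \Po ('X + s%:P).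
  elim: m => [|m IHm]; first by rewrite !derivn0.
  by rewrite !derivnS IHm deriv_comp derivD derivX derivC addr0 mulr1.
have := congr1 (horner^~ 0) (shift n).
rewrite /= horner_comp hornerD hornerX hornerC add0r => <-.
by rewrite horner_coef0 coef_derivn addn0 ffactnn.
Qed.

End Univariate.

Section LegendreFacts.
Variable R : rcfType.
Implicit Types (n : nat) (s : R).

Let D n : {poly R} := ('X^2 - 1) ^+ n.

Lemma rodrigues_monic n : D n \is monic /\ size (D n) = (n + n).+1.
Proof.
have monD : ('X^2 - 1 : {poly R}) \is monic by rewrite -polyC1 monicXnsubC.
have monDn := monic_exp n monD; split => //.
rewrite -[size _]prednK ?lt0n ?size_poly_eq0 ?monic_neq0 // size_exp.
by rewrite -polyC1 size_XnsubC //= mul2n addnn.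
Qed.

Lemma legendre_size n : (size (legendre R n) <= n.+1)%N.
Proof.
have [_ sz_D] := rodrigues_monic n.
apply/leq_sizeP => j lt_nj; rewrite /legendre coefZ coef_derivn.
by rewrite nth_default ?mul0rn ?mulr0 // -/(D n) sz_D; lia.
Qed.

Lemma legendre_lead_neq0 n : (legendre R n)`_n != 0.
Proof.
have [monD sz_D] := rodrigues_monic n.
have lcD : (D n)`_(n + n) = 1 by move/monicP: monD; rewrite lead_coefE sz_D.
rewrite /legendre coefZ coef_derivn -/(D n) lcD mulf_neq0 ?invr_eq0 ?pnatr_eq0 //.
  by rewrite -lt0n muln_gt0 expn_gt0 fact_gt0.
by rewrite -lt0n ffact_gt0 leq_addr.
Qed.

(* P_n(1) = 1 and P_n(-1) = (-1)^n: around s = +-1 the Rodrigues polynomial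
   is h^n (h + 2s)^n, so its n-th Taylor coefficient at s is (2s)^n. *)
Lemma legendre_pm1 n s : s ^+ 2 = 1 -> (legendre R n).[s] = s ^+ n.
Proof.
move=> s2; have shift : D n \Po ('X + s%:P) = 'X^n * ('X + (2 * s)%:P) ^+ n.
  rewrite /D -exprMn rmorphXn /= comp_polyB comp_polyC rmorphXn /= comp_polyX.
  have s2P : s%:P ^+ 2 = 1 :> {poly R} by rewrite -rmorphXn s2.
  by rewrite polyC1 -s2P polyCM rmorph_nat; congr (_ ^+ _); ring.
rewrite /legendre hornerZ derivn_horner_taylor -/(D n) shift coefXnM ltnn subnn.
rewrite -horner_coef0 horner_exp hornerD hornerX hornerC add0r.
rewrite exprMn -mulr_natr natrM natrX mulrA [_ * 2 ^+ n]mulrC.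
have n2 : (2 : R) ^+ n != 0 by rewrite expf_neq0 // pnatr_eq0.
have nfact : (n`!%:R : R) != 0 by rewrite pnatr_eq0 -lt0n fact_gt0.
by field; rewrite n2 nfact.
Qed.

End LegendreFacts.

Section Bivariate.
Variable R : numFieldType.
Implicit Types (c d : nat -> nat -> R) (x y s : R).

(* The bivariate polynomial with coefficient array c, summed over the index
   square [0, N)^2; N is always taken above the degree, so nothing is lost. *)
Definition bieval N c x y : R :=
  \sum_(i < N) \sum_(j < N) c i j * x ^+ i * y ^+ j.

Definition deg_lt n c := forall i j, (n <= i + j)%N -> c i j = 0.

Definition transpose c : nat -> nat -> R := fun i j => c j i.

(* Truncation of c to total degree at most n: the part that evalP n reads. *)
Definition truncate n c : nat -> nat -> R :=
  fun i j => if (i + j <= n)%N then c i j else 0.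

Definition column N c j : {poly R} := \poly_(i < N) c i j.

Definition trace_at N c s : {poly R} := \poly_(j < N) \sum_(i < N) c i j * s ^+ i.

Lemma bieval_transpose N c x y : bieval N c x y = bieval N (transpose c) y x.
Proof.
rewrite /bieval exchange_big /=; apply: eq_bigr => i _; apply: eq_bigr => j _.
by rewrite /transpose -!mulrA [_ ^+ j * _]mulrC.
Qed.

Lemma deg_lt_transpose n c : deg_lt n c -> deg_lt n (transpose c).
Proof. by move=> deg_c i j le_n; apply: deg_c; rewrite addnC. Qed.

Lemma deg_lt_truncate n c : deg_lt n.+1 (truncate n c).
Proof. by move=> i j lt_n; rewrite /truncate leqNgt lt_n. Qed.

Lemma bieval_deg_lt0 N c x y : deg_lt 0 c -> bieval N c x y = 0.
Proof.
by move=> deg_c; rewrite /bieval big1 // => i _; rewrite big1 // => j _; rewrite deg_c ?mul0r.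
Qed.

Lemma bieval_truncate n N c x y :
  deg_lt n.+1 c -> bieval N (truncate n c) x y = bieval N c x y.
Proof.
move=> deg_c; apply: eq_bigr => i _; apply: eq_bigr => j _; rewrite /truncate.
by case: leqP => // lt_n; rewrite deg_c.
Qed.

Lemma bieval_column N c x y :
  bieval N c x y = \sum_(j < N) (column N c j).[x] * y ^+ j.
Proof.
rewrite /bieval exchange_big /=; apply: eq_bigr => j _.
by rewrite horner_poly mulr_suml.
Qed.

Lemma size_column n N c j : deg_lt n c -> (size (column N c j) <= n - j)%N.
Proof.
move=> deg_c; apply/leq_sizeP => i le_i; rewrite coef_poly.
by case: ifP => // _; apply: deg_c; lia.
Qed.

Lemma trace_at_horner N c s y : (trace_at N c s).[y] = bieval N c s y.
Proof.
rewrite horner_poly bieval_column; apply: eq_bigr => j _.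
by rewrite horner_poly.
Qed.

(* Division by x^2 - 1: if the polynomial vanishes on the lines x = 1 and
   x = -1, each column is divisible by x^2 - 1, and the quotient array has
   total degree two lower. *)
Lemma factor_x n N c : deg_lt n c -> (n <= N)%N ->
    (forall s, s ^+ 2 = 1 -> forall y, bieval N c s y = 0) ->
  exists2 d, deg_lt (n - 2) d &
    forall x y, bieval N c x y = (x ^+ 2 - 1) * bieval N d x y.
Proof.
move=> deg_c le_nN c0.
have col0 j s : s ^+ 2 = 1 -> (column N c j).[s] = 0.
  move=> s2; have [lt_jN|le_Nj] := ltnP j N.
    apply: (coef_eq0_of_horner (a := fun j => (column N c j).[s])) lt_jN => y.
    by rewrite -bieval_column c0.
  have := size_column N j deg_c; rewrite (_ : n - j = 0)%N; last by lia.
  by rewrite leqn0 size_poly_eq0 => /eqP ->; rewrite horner0.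
pose d i j := (column N c j %/ ('X^2 - 1))`_i.
exists d => [i j le_ij | x y].
  have [_ sz_q] := divp_X2sub1 (col0 j); have sz_col := size_column N j deg_c.
  by rewrite /d nth_default // sz_q; lia.
rewrite !bieval_column mulr_sumr; apply: eq_bigr => j _.
have [col_eq sz_q] := divp_X2sub1 (col0 j).
have -> : column N d j = column N c j %/ ('X^2 - 1).
  apply/polyP => i; rewrite coef_poly; case: ltnP => // le_Ni.
  have sz_col := size_column N j deg_c.
  by rewrite nth_default // sz_q; lia.
by rewrite {1}col_eq hornerM !hornerE /=; ring.
Qed.

(* After dividing by x^2 - 1 the quotient still vanishes
   on y = +-1, so we may divide it by y^2 - 1 through the transposition. *)
Lemma factor_boundary n N c : deg_lt n c -> (n <= N)%N ->
    (forall s, s ^+ 2 = 1 -> forall t, bieval N c s t = 0) ->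
    (forall s, s ^+ 2 = 1 -> forall t, bieval N c t s = 0) ->
  exists2 e, deg_lt (n - 4) e &
    forall x y, bieval N c x y = (x ^+ 2 - 1) * (y ^+ 2 - 1) * bieval N e x y.
Proof.
move=> deg_c le_nN cx0 cy0; have [d deg_d cd] := factor_x deg_c le_nN cx0.
have dy0 s : s ^+ 2 = 1 -> forall x, bieval N (transpose d) s x = 0.
  move=> s2; suff d0 : trace_at N (transpose d) s = 0.
    by move=> x; rewrite -trace_at_horner d0 horner0.
  have /eqP : ('X^2 - 1) * trace_at N (transpose d) s = 0.
    apply: poly_eq0_of_horner => x.
    by rewrite hornerM trace_at_horner -bieval_transpose !hornerE -cd cy0.
  rewrite mulf_eq0 => /orP [|/eqP //].
  by rewrite -size_poly_eq0 -polyC1 size_XnsubC.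
have [|e' deg_e' de'] := factor_x (deg_lt_transpose deg_d) _ dy0; first by lia.
exists (transpose e') => [|x y]; first by rewrite -subnDA in deg_e'; exact: deg_lt_transpose.
by rewrite cd bieval_transpose de' -mulrA -bieval_transpose.
Qed.

End Bivariate.

Section SpaceRm.
Variables (R : realFieldType) (m : nat).
Hypothesis m_odd : odd m.
Implicit Types (c : nat -> nat -> R) (a s t x y : R).

Definition rm_eval c a x y : R :=
  bieval m.+1 c x y + a * (x ^+ m * y - x * y ^+ m).

Lemma rm_eval_transpose c a x y : rm_eval c a x y = rm_eval (transpose c) (- a) y x.
Proof. by rewrite /rm_eval bieval_transpose; congr (_ + _); ring. Qed.

Lemma odd_exp_sign s : s ^+ 2 = 1 -> s ^+ m = s.
Proof.
move=> s2; rewrite -(odd_double_half m) m_odd exprD expr1 -mul2n exprM s2.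
by rewrite expr1n mulr1.
Qed.

(* The restriction of an element of R_m to the vertical side x = s, s = +-1,
   as a polynomial in y: there x^m y - x y^m becomes s (y - y^m). *)
Definition side_poly c a s : {poly R} := trace_at m.+1 c s + (a * s) *: ('X - 'X^m).

Lemma side_poly_horner c a s y : s ^+ 2 = 1 -> (side_poly c a s).[y] = rm_eval c a s y.
Proof.
move=> s2; rewrite hornerD trace_at_horner !hornerE /rm_eval (odd_exp_sign s2).
by congr (_ + _); ring.
Qed.

Lemma side_poly_size c a s : (size (side_poly c a s) <= m.+1)%N.
Proof.
have m_gt0 : (0 < m)%N by case: m m_odd.
rewrite (leq_trans (size_polyD _ _)) // geq_max size_poly /=.
rewrite (leq_trans (size_scale_leq _ _)) // (leq_trans (size_polyD _ _)) //.
by rewrite geq_max size_polyN size_polyX size_polyXn leqnn andbT ltnS.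
Qed.

(* ... with coefficient c_{0m} - a s on y^m (when m = 1 the extra function
   x^m y - x y^m is zero, so a can be taken to be 0 then). *)
Lemma side_poly_lead c a s : deg_lt m.+1 c -> (1 < m)%N \/ a = 0 ->
  (side_poly c a s)`_m = c 0 m - a * s.
Proof.
move=> deg_c m_a; rewrite coefD coef_poly ltnS leqnn coefZ coefB coefX coefXn eqxx.
rewrite big_ord_recl expr0 mulr1 big1 => [|i _]; last first.
  by rewrite deg_c ?mul0r // lift0 addSn ltnS leq_addl.
case: m_a => [lt_1m|->]; last by rewrite !mul0r !addr0 subr0.
by rewrite (_ : (m == 1) = false) /=; [ring | lia].
Qed.

Section Boundary.
Variables (L : {poly R}) (z : 'I_m -> R).
Hypotheses (z_inj : injective z) (L_size : (size L <= m.+1)%N).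
Hypothesis L_root : forall i, L.[z i] = 0.

Lemma side_proportional c a s : deg_lt m.+1 c -> (1 < m)%N \/ a = 0 -> s ^+ 2 = 1 ->
    (forall i, rm_eval c a s (z i) = 0) ->
  forall y, L`_m * rm_eval c a s y = (c 0 m - a * s) * L.[y].
Proof.
move=> deg_c m_a s2 v0 y; rewrite -side_poly_lead // -side_poly_horner //.
have := poly_proportional z_inj (side_poly_size c a s) L_size _ L_root.
move=> /(_ _) /(congr1 (horner^~ y)); rewrite !hornerZ; apply=> i.
by rewrite side_poly_horner.
Qed.

Hypotheses (L_lead : L`_m != 0) (L_sign : forall s, s ^+ 2 = 1 -> L.[s] = s).

(* If an element of R_m vanishes at the points (+-1, z_i) and (z_i, +-1), then
   a = 0 and it vanishes on the whole boundary of [-1,1]^2: computing the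
   value at the corners (s, t) along both sides through them gives
   (c_{0m} - a s) t = (c_{m0} + a t) s, which forces a = c_{0m} = c_{m0} = 0. *)
Lemma rm_boundary c a : deg_lt m.+1 c -> (1 < m)%N \/ a = 0 ->
    (forall s, s ^+ 2 = 1 -> forall i, rm_eval c a s (z i) = 0 /\ rm_eval c a (z i) s = 0) ->
  [/\ a = 0, forall s, s ^+ 2 = 1 -> forall t, bieval m.+1 c s t = 0
           & forall s, s ^+ 2 = 1 -> forall t, bieval m.+1 c t s = 0].
Proof.
move=> deg_c m_a v0.
have along_x s (s2 : s ^+ 2 = 1) := side_proportional deg_c m_a s2 (fun i => (v0 s s2 i).1).
have along_y t (t2 : t ^+ 2 = 1) y : L`_m * rm_eval c a y t = (c m 0 + a * t) * L.[y].
  have m_na : (1 < m)%N \/ - a = 0 by case: m_a => [|->]; [left | right; rewrite oppr0].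
  rewrite rm_eval_transpose (side_proportional (deg_lt_transpose deg_c) m_na t2).
    by rewrite mulNr opprK.
  by move=> i; rewrite -rm_eval_transpose (v0 t t2 i).2.
have corner s t : s ^+ 2 = 1 -> t ^+ 2 = 1 -> (c 0 m - a * s) * t = (c m 0 + a * t) * s.
  by move=> s2 t2; have := along_x s s2 t; rewrite along_y // !L_sign.
have one2 : (1 : R) ^+ 2 = 1 by rewrite expr1n.
have mone2 : (-1 : R) ^+ 2 = 1 by rewrite sqrrN expr1n.
have e1 := corner 1 1 one2 one2; have e2 := corner 1 (-1) one2 mone2.
have e3 := corner (-1) 1 mone2 one2.
have a0 : a = 0 by lra.
have [c0m cm0] : c 0 m = 0 /\ c m 0 = 0 by split; lra.
have side0 (v : R) (lin : L`_m * v = 0) : v = 0.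
  by apply/eqP; move/eqP: lin; rewrite mulf_eq0 (negPf L_lead).
have v_eq x y : rm_eval c a x y = bieval m.+1 c x y by rewrite /rm_eval a0 mul0r addr0.
split=> // s s2 t; apply: side0; rewrite -v_eq.
  by rewrite along_x // c0m a0 mul0r subr0 mul0r.
by rewrite along_y // cm0 a0 mul0r addr0 mul0r.
Qed.

End Boundary.
End SpaceRm.

Section Unisolvence.
Variable R : rcfType.
Implicit Types (c e : nat -> nat -> R) (x y : R).

Lemma evalP_truncate n N c x y :
  (n < N)%N -> evalP n c x y = bieval N (truncate n c) x y.
Proof.
move=> lt_nN; rewrite /evalP /bieval.
rewrite (big_ord_widen N (fun i => \sum_(j < (n - i).+1) c i j * x ^+ i * y ^+ j)) //.
rewrite big_mkcond /=; apply: eq_bigr => i _; case: ifP => le_in; last first.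
  by rewrite big1 // => j _; rewrite /truncate ifN ?mul0r //; lia.
rewrite (big_ord_widen N (fun j => c i j * x ^+ i * y ^+ j)); last by lia.
rewrite big_mkcond /=; apply: eq_bigr => j _; rewrite /truncate.
have -> : (j < (n - i).+1)%N = (i + j <= n)%N by lia.
by case: (i + j <= n)%N; rewrite ?mul0r.
Qed.

Lemma evalR_rm_eval m c a x y :
  evalR m c a x y = rm_eval m (truncate m c) a x y.
Proof. by rewrite /evalR (evalP_truncate _ _ _ (ltnSn m)). Qed.

(* For m = 1 the extra function x^m y - x y^m is zero, so a is irrelevant. *)
Lemma rm_eval_extra_coef m c a : odd m ->
  exists2 a', (1 < m)%N \/ a' = 0 & forall x y, rm_eval m c a x y = rm_eval m c a' x y.
Proof.
case: m => [//|[_|m _]]; last by exists a; [left|].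
exists 0 => [|x y]; first by right.
by rewrite /rm_eval !expr1 [x * y]mulrC subrr !mulr0.
Qed.

Lemma gaussBoundary_sides n (g : 'I_n -> R) s i : s ^+ 2 = 1 ->
  (s, g i) \in gaussBoundary g /\ (g i, s) \in gaussBoundary g.
Proof.
move/eqP; rewrite sqrf_eq1 => /orP [] /eqP ->; rewrite /gaussBoundary !mem_cat;
  by rewrite !(map_f _ (mem_enum _ i)) ?orbT.
Qed.

Lemma sqr_sub1_neq0 x : -1 < x < 1 -> x ^+ 2 - 1 != 0.
Proof.
by case/andP=> lo hi; rewrite subr_eq0 sqrf_eq1 negb_or lt_eqF // gt_eqF.
Qed.

(* Unisolvence of I for P_{2k-3}, transported to square-indexed arrays: an
   array of total degree below 2k - 2 whose polynomial vanishes on I is zero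
   (for k <= 1 such an array is zero to begin with). *)
Lemma interior_zero k (I : seq (R * R)) N e :
    ((1 < k)%N -> forall c d : nat -> nat -> R,
      (forall p, p \in I -> evalP (2 * k - 3) c p.1 p.2 = evalP (2 * k - 3) d p.1 p.2) ->
      forall x y : R, evalP (2 * k - 3) c x y = evalP (2 * k - 3) d x y) ->
    (2 * k - 2 <= N)%N -> deg_lt (2 * k - 2) e ->
    (forall p, p \in I -> bieval N e p.1 p.2 = 0) ->
  forall x y, bieval N e x y = 0.
Proof.
move=> I_unisolvent le_N deg_e e0 x y.
have [le_k1 | lt_1k] := leqP k 1.
  by apply: bieval_deg_lt0; rewrite (_ : 0 = 2 * k - 2)%N //; lia.
have evalP_e u v : evalP (2 * k - 3) e u v = bieval N e u v.
  rewrite (@evalP_truncate _ N); last by lia.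
  by rewrite bieval_truncate // (_ : (2 * k - 3).+1 = 2 * k - 2)%N //; lia.
have evalP0 u v : evalP (2 * k - 3) (fun _ _ => 0) u v = 0.
  by rewrite /evalP big1 // => i _; rewrite big1 // => j _; rewrite !mul0r.
rewrite -evalP_e (I_unisolvent lt_1k _ (fun _ _ => 0)) ?evalP0 // => p pI.
by rewrite evalP_e evalP0 e0.
Qed.

End Unisolvence.

Theorem theorem2p1 (R : rcfType) (k : nat)
  (g : 'I_(2 * k + 1) -> R)
  (g_inj : injective g)
  (g_root : forall i, root (legendre R (2 * k + 1)) (g i))
  (I : seq (R * R))
  (I_uniq : uniq I)
  (I_size : size I = ((2 * k - 1) * (k - 1))%N)
  (I_interior : forall p, p \in I -> (-1 < p.1 < 1) && (-1 < p.2 < 1))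
  (I_unisolvent : (1 < k)%N -> forall c d : nat -> nat -> R,
      (forall p, p \in I -> evalP (2 * k - 3) c p.1 p.2 = evalP (2 * k - 3) d p.1 p.2) ->
      forall x y : R, evalP (2 * k - 3) c x y = evalP (2 * k - 3) d x y)
  (c : nat -> nat -> R) (a : R)
  (hvanish : forall p, p \in gaussBoundary g ++ I ->
      evalR (2 * k + 1) c a p.1 p.2 = 0) :
  forall x y : R, evalR (2 * k + 1) c a x y = 0.
Proof.
set m := (2 * k + 1)%N in g g_inj g_root hvanish *.
have m_odd : odd m by rewrite /m addn1 /= mul2n odd_double.
have [a' m_a' a_a'] := rm_eval_extra_coef (truncate m c) a m_odd.
pose v x y := rm_eval m (truncate m c) a' x y.
have v_eq x y : evalR m c a x y = v x y by rewrite evalR_rm_eval a_a'.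
have L_sign s : s ^+ 2 = 1 -> (legendre R m).[s] = s.
  by move=> s2; rewrite legendre_pm1 // odd_exp_sign.
have v0 s (s2 : s ^+ 2 = 1) i : v s (g i) = 0 /\ v (g i) s = 0.
  have [Gs Gs'] := gaussBoundary_sides g i s2.
  by split; rewrite -v_eq; [apply: (hvanish (s, g i)) | apply: (hvanish (g i, s))];
    rewrite mem_cat ?Gs ?Gs'.
have [a'0 side_x side_y] := rm_boundary m_odd g_inj (legendre_size R m)
  (fun i => rootP (g_root i)) (legendre_lead_neq0 R m) L_sign (@deg_lt_truncate _ m c) m_a' v0.
have [e deg_e v_e] := factor_boundary (@deg_lt_truncate _ m c) (leqnn _) side_x side_y.
have v_factor x y : v x y = (x ^+ 2 - 1) * (y ^+ 2 - 1) * bieval m.+1 e x y.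
  by rewrite /v /rm_eval a'0 mul0r addr0 v_e.
move=> x y; rewrite v_eq v_factor (interior_zero I_unisolvent _ _ _) ?mulr0 //.
- by rewrite /m; lia.
- by rewrite (_ : 2 * k - 2 = m.+1 - 4)%N // /m; lia.
move=> p pI; have /andP [/sqr_sub1_neq0 nz1 /sqr_sub1_neq0 nz2] := I_interior p pI.
have := hvanish p; rewrite mem_cat pI orbT v_eq v_factor => /(_ isT) /eqP.
by rewrite !mulf_eq0 (negPf nz1) (negPf nz2) => /eqP.
Qed.
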